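(* Let $G=(V,E,w)$ be a weighted graph with matrix $W$, and let $\theta\in[0,1]^V$ satisfy $W\theta\ge\mathbf 1$ coordinatewise. Let $\mathcal{D}$ be the distribution of a random subset $S\subseteq V$ that includes each $v\in V$ independently with probability $\theta_v$. Then (i) $\mathbb{E}_{S\sim\mathcal{D}}[|S|]=\|\theta\|_1$; (ii) $\mathbb{E}_{S\sim\mathcal{D}}[\mathrm{Induced}(S)]\le\|\theta\|_1^2+\|\theta\|_1$; (iii) $\mathbb{E}_{S\sim\mathcal{D}}[\mathrm{Cut}(S,V\setminus S)]\ge|V|-2\|\theta\|_1$.
   Context: $W=(W_{u,v})_{u,v\in V}$ is a symmetric matrix with entries in $[0,1]$ and $W_{v,v}=1$; the weighted graph has edges $\{u,v\}$, $u\neq v$, with $W_{u,v}>0$ and weight $W_{u,v}$. For $S\subseteq V$: $\mathrm{Cut}(S,V\setminus S)=\sum_{u\in S}\sum_{v\in V\setminus S}W_{u,v}$ and $\mathrm{Induced}(S)=\sum_{u\in S}\sum_{v\in S}W_{u,v}$. *)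

From mathcomp Require Import all_boot all_order all_algebra.
Set Implicit Arguments. Unset Strict Implicit. Unset Printing Implicit Defensive.
Import Order.TTheory GRing.Theory Num.Theory.
Local Open Scope ring_scope.

Section Defs.
Variables (R : realFieldType) (V : finType).

Definition Cut (W : V -> V -> R) (S : {set V}) : R :=
  \sum_(u in S) \sum_(v in ~: S) W u v.

Definition Induced (W : V -> V -> R) (S : {set V}) : R :=
  \sum_(u in S) \sum_(v in S) W u v.

(* probability of S under independent inclusion of each v with prob theta v *)
Definition prodProb (theta : V -> R) (S : {set V}) : R :=
  \prod_(v in S) theta v * \prod_(v in ~: S) (1 - theta v).

Definition Expect (theta : V -> R) (f : {set V} -> R) : R :=
  \sum_(S : {set V}) prodProb theta S * f S.

Definition norm1 (theta : V -> R) : R := \sum_v `|theta v|.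

End Defs.

(* Write every quantity as a sum of indicators [u \in S].  By independence,
   for u <> v the events [u \in S] and [v \in S] have joint probability
   theta u * theta v, so E[Induced S] is the quadratic form theta^T W theta
   plus the diagonal variances theta u (1 - theta u), hence at most
   ||theta||^2 + ||theta||, while E[Cut S] is theta^T W (1 - theta) minus the
   same variances.  As W is symmetric and W theta >= 1,
   theta^T W (1 - theta) >= sum_v (1 - theta v) = |V| - ||theta||. *)

From mathcomp Require Import all_boot all_order all_algebra.
From mathcomp Require Import lra.

Set Implicit Arguments.
Unset Strict Implicit.
Unset Printing Implicit Defensive.
Import Order.TTheory GRing.Theory Num.Theory.
Local Open Scope ring_scope.

Section ProductDistribution.
Context {R : realFieldType} {V : finType} {theta : V -> R}.

Lemma prodProbE S :
  prodProb theta S = \prod_v (if v \in S then theta v else 1 - theta v).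
Proof.
rewrite /prodProb [RHS](bigID (mem S)) /=; congr (_ * _).
  by apply: eq_bigr => v ->.
by apply: eq_big => v; rewrite ?inE // => /negbTE ->.
Qed.

Lemma Expect_prod (c : V -> bool -> R) :
  Expect theta (fun S => \prod_v c v (v \in S)) =
  \prod_v (theta v * c v true + (1 - theta v) * c v false).
Proof.
rewrite bigA_distr; apply: eq_big => [S|S _]; first by rewrite inE.
rewrite prodProbE -big_split; apply: eq_bigr => v _.
by case: (v \in S).
Qed.

Lemma eq_Expect {f g : {set V} -> R} :
  f =1 g -> Expect theta f = Expect theta g.
Proof. by move=> fg; apply: eq_bigr => S _; rewrite fg. Qed.

Lemma Expect_sum (I : Type) (r : seq I) (P : pred I) (F : I -> {set V} -> R) :
  Expect theta (fun S => \sum_(i <- r | P i) F i S) =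
  \sum_(i <- r | P i) Expect theta (F i).
Proof.
rewrite /Expect; under eq_bigr do rewrite mulr_sumr.
by rewrite exchange_big.
Qed.

Lemma ExpectZ (a : R) (f : {set V} -> R) :
  Expect theta (fun S => a * f S) = a * Expect theta f.
Proof. by rewrite /Expect mulr_sumr; apply: eq_bigr => S _; rewrite mulrCA. Qed.

Lemma Expect_single u (a : bool -> R) :
  Expect theta (fun S => a (u \in S)) =
  theta u * a true + (1 - theta u) * a false.
Proof.
pose c v b := if v == u then a b else 1.
have cE (S : {set V}) : a (u \in S) = \prod_v c v (v \in S).
  by rewrite (bigD1 u) //= /c eqxx big1 ?mulr1 // => v /negbTE ->.
rewrite (eq_Expect cE) Expect_prod (bigD1 u) //= /c eqxx big1 ?mulr1 //.
by move=> v /negbTE ->; rewrite !mulr1 addrC subrK.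
Qed.

Lemma Expect_pair u w (a b : bool -> R) : u != w ->
  Expect theta (fun S => a (u \in S) * b (w \in S)) =
  (theta u * a true + (1 - theta u) * a false) *
  (theta w * b true + (1 - theta w) * b false).
Proof.
move=> uw; have wu : w != u by rewrite eq_sym.
pose c v x := if v == u then a x else if v == w then b x else 1.
have cE (S : {set V}) : a (u \in S) * b (w \in S) = \prod_v c v (v \in S).
  rewrite (bigD1 u) //= (bigD1 w) //= /c eqxx (negbTE wu) eqxx mulrA.
  rewrite big1 ?mulr1 //.
  by move=> v /andP[/negbTE -> /negbTE ->].
rewrite (eq_Expect cE) Expect_prod (bigD1 u) //= (bigD1 w) //= /c eqxx.
rewrite (negbTE wu) eqxx mulrA big1 ?mulr1 // => v /andP[/negbTE -> /negbTE ->].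
by rewrite !mulr1 addrC subrK.
Qed.

Lemma Expect_mem u : Expect theta (fun S => (u \in S)%:R) = theta u.
Proof. by rewrite (Expect_single u (fun b => b%:R)) mulr1 mulr0 addr0. Qed.

Lemma Expect_mem_mem u v :
  Expect theta (fun S => ((u \in S) && (v \in S))%:R) =
  theta u * theta v + (u == v)%:R * (theta u * (1 - theta u)).
Proof.
have [<-|uv] := eqVneq u v.
  under eq_Expect do rewrite andbb.
  by rewrite Expect_mem mul1r mulrBr mulr1 addrC subrK.
under eq_Expect do rewrite -mulnb natrM.
rewrite (Expect_pair (fun b => b%:R) (fun b => b%:R) uv).
by rewrite !mulr1 !mulr0 !addr0 mul0r addr0.
Qed.

Lemma Expect_mem_notin u v :
  Expect theta (fun S => ((u \in S) && (v \notin S))%:R) =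
  theta u * (1 - theta v) - (u == v)%:R * (theta u * (1 - theta u)).
Proof.
have [<-|uv] := eqVneq u v.
  under eq_Expect do rewrite andbN.
  by rewrite /Expect big1 ?mul1r ?subrr // => S _; rewrite mulr0.
under eq_Expect do rewrite -mulnb natrM.
rewrite (Expect_pair (fun b => b%:R) (fun b => (~~ b)%:R) uv) /=.
by rewrite !mulr1 !mulr0 !addr0 add0r mul0r subr0.
Qed.

End ProductDistribution.

Section CutAndInduced.
Context {R : realFieldType} {V : finType} {W : V -> V -> R} {theta : V -> R}.

Lemma sumr_delta (F : V -> R) (x : R) u :
  \sum_v F v * ((u == v)%:R * x) = F u * x.
Proof.
rewrite (bigD1 u) //= eqxx mul1r big1 ?addr0 // => v.
by rewrite eq_sym => /negbTE ->; rewrite mul0r mulr0.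
Qed.

Lemma card_sum_mem (S : {set V}) : #|S|%:R = \sum_u (u \in S)%:R :> R.
Proof.
rewrite -sum1_card natr_sum big_mkcond /=.
by apply: eq_bigr => u _; case: (u \in S).
Qed.

Lemma Induced_sum_mem S :
  Induced W S = \sum_u \sum_v W u v * ((u \in S) && (v \in S))%:R.
Proof.
rewrite /Induced big_mkcond; apply: eq_bigr => u _ /=.
case: (u \in S); last by rewrite big1 // => v _; rewrite mulr0.
rewrite big_mkcond; apply: eq_bigr => v _.
by case: (v \in S); rewrite ?mulr1 ?mulr0.
Qed.

Lemma Cut_sum_mem S :
  Cut W S = \sum_u \sum_v W u v * ((u \in S) && (v \notin S))%:R.
Proof.
rewrite /Cut big_mkcond; apply: eq_bigr => u _ /=.
case: (u \in S); last by rewrite big1 // => v _; rewrite mulr0.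
rewrite big_mkcond; apply: eq_bigr => v _; rewrite inE.
by case: (v \in S); rewrite ?mulr1 ?mulr0.
Qed.

Lemma Expect_card : Expect theta (fun S => #|S|%:R) = \sum_u theta u.
Proof.
rewrite (eq_Expect card_sum_mem) Expect_sum.
by apply: eq_bigr => u _; rewrite Expect_mem.
Qed.

Lemma Expect_Induced :
  Expect theta (Induced W) =
  \sum_u \sum_v W u v * (theta u * theta v) +
  \sum_u W u u * (theta u * (1 - theta u)).
Proof.
rewrite (eq_Expect Induced_sum_mem) Expect_sum -big_split.
apply: eq_bigr => u _; rewrite Expect_sum -(sumr_delta (W u)) -big_split.
by apply: eq_bigr => v _; rewrite ExpectZ Expect_mem_mem mulrDr.
Qed.

Lemma Expect_Cut :
  Expect theta (Cut W) =
  \sum_u \sum_v W u v * (theta u * (1 - theta v)) -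
  \sum_u W u u * (theta u * (1 - theta u)).
Proof.
rewrite (eq_Expect Cut_sum_mem) Expect_sum -sumrB.
apply: eq_bigr => u _; rewrite Expect_sum -(sumr_delta (W u)) -sumrB.
by apply: eq_bigr => v _; rewrite ExpectZ Expect_mem_notin mulrBr.
Qed.

Hypothesis W_sym : forall u v, W u v = W v u.
Hypothesis W01 : forall u v, 0 <= W u v <= 1.
Hypothesis W_diag : forall v, W v v = 1.
Hypothesis theta01 : forall v, 0 <= theta v <= 1.
Hypothesis W_theta : forall u, 1 <= \sum_v W u v * theta v.

Lemma norm1E : norm1 theta = \sum_v theta v.
Proof.
by apply: eq_bigr => v _; rewrite ger0_norm //; case/andP: (theta01 v).
Qed.

Lemma sum_diag_variance_le :
  \sum_u W u u * (theta u * (1 - theta u)) <= \sum_u theta u.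
Proof.
apply: ler_sum => u _; rewrite W_diag mul1r mulrBr mulr1 lerBlDr lerDl.
by rewrite -expr2 sqr_ge0.
Qed.

Lemma quadratic_form_le :
  \sum_u \sum_v W u v * (theta u * theta v) <= (\sum_u theta u) ^+ 2.
Proof.
rewrite expr2 mulr_suml; apply: ler_sum => u _; rewrite mulr_sumr.
apply: ler_sum => v _; have /andP[_ W1] := W01 u v.
have /andP[tu _] := theta01 u; have /andP[tv _] := theta01 v.
by apply: ler_piMl => //; exact: mulr_ge0.
Qed.

Lemma cut_form_ge :
  #|V|%:R - \sum_v theta v <=
  \sum_u \sum_v W u v * (theta u * (1 - theta v)).
Proof.
rewrite -sum1_card natr_sum -sumrB exchange_big /=; apply: ler_sum => v _.
have /andP[_ tv1] := theta01 v.
have -> : \sum_u W u v * (theta u * (1 - theta v)) =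
          (1 - theta v) * \sum_u W v u * theta u.
  by rewrite mulr_sumr; apply: eq_bigr => u _; rewrite W_sym mulrA mulrC.
by rewrite -[leLHS]mulr1; apply: ler_wpM2l; rewrite ?subr_ge0.
Qed.

End CutAndInduced.

Theorem lemma5p2 (R : realFieldType) (V : finType)
  (W : V -> V -> R) (theta : V -> R)
  (Wsym : forall u v, W u v = W v u)
  (W01 : forall u v, 0 <= W u v <= 1)
  (Wdiag : forall v, W v v = 1)
  (theta01 : forall v, 0 <= theta v <= 1)
  (Wtheta : forall u, 1 <= \sum_v W u v * theta v) :
  [/\ Expect theta (fun S => (#|S|%:R : R)) = norm1 theta,
      Expect theta (Induced W) <= norm1 theta ^+ 2 + norm1 theta &
      Expect theta (Cut W) >= #|V|%:R - 2 * norm1 theta].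
Proof.
rewrite norm1E //; split.
- exact: Expect_card.
- rewrite Expect_Induced; apply: lerD.
    exact: quadratic_form_le.
  exact: sum_diag_variance_le.
- rewrite Expect_Cut.
  have := cut_form_ge Wsym theta01 Wtheta.
  have := sum_diag_variance_le (theta := theta) Wdiag.
  lra.
Qed.
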